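(* There is a one-to-one correspondence between strict $2$-term homotopy Nijenhuis algebras and crossed modules of Nijenhuis algebras. Explicitly, a strict $2$-term homotopy Nijenhuis algebra $((\mathcal{A}_1\xrightarrow{\partial}\mathcal{A}_0,\mu_2,\mu_3=0),(\mathcal{N}_0,\mathcal{N}_1,\mathcal{N}_2=0))$ corresponds to the crossed module $\big(((\mathcal{A}_0,\mu_2),\mathcal{N}_0),((\mathcal{A}_1,\cdot_1),\mathcal{N}_1),\partial,\triangleright,\triangleleft\big)$ with $u\cdot_1v=\mu_2(\partial u,v)$, $a\triangleright u=\mu_2(a,u)$, $u\triangleleft a=\mu_2(u,a)$; conversely a crossed module $\big(((A,\cdot),N),((A_1,\cdot_1),N_1),\varphi,\triangleright,\triangleleft\big)$ corresponds to $((A_1\xrightarrow{\varphi}A,\mu_2,0),(N,N_1,0))$ with $\mu_2(a,b)=a\cdot b$, $\mu_2(a,u)=a\triangleright u$, $\mu_2(u,a)=u\triangleleft a$.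
   Context: Over a field of characteristic $0$. A 2-term $A_\infty$-algebra $(\mathcal{A}_1\xrightarrow{\partial}\mathcal{A}_0,\mu_2,\mu_3)$: linear $\partial$, bilinear $\mu_2:\mathcal{A}_i\times\mathcal{A}_j\to\mathcal{A}_{i+j}$ ($0\le i,j,i+j\le1$), trilinear $\mu_3:\mathcal{A}_0^{\times3}\to\mathcal{A}_1$, with, for $a,b,c,d\in\mathcal{A}_0$, $u,v\in\mathcal{A}_1$: $\partial\mu_2(a,u)=\mu_2(a,\partial u)$; $\partial\mu_2(u,a)=\mu_2(\partial u,a)$; $\mu_2(\partial u,v)=\mu_2(u,\partial v)$; $\partial\mu_3(a,b,c)=\mu_2(\mu_2(a,b),c)-\mu_2(a,\mu_2(b,c))$; $\mu_3(a,b,\partial u)=\mu_2(\mu_2(a,b),u)-\mu_2(a,\mu_2(b,u))$; $\mu_3(a,\partial u,b)=\mu_2(\mu_2(a,u),b)-\mu_2(a,\mu_2(u,b))$; $\mu_3(\partial u,a,b)=\mu_2(\mu_2(u,a),b)-\mu_2(u,\mu_2(a,b))$; and a pentagon-type identity for $\mu_3$ (trivially satisfied when $\mu_3=0$). A homotopy Nijenhuis operator is $(\mathcal{N}_0,\mathcal{N}_1,\mathcal{N}_2)$ with $\mathcal{N}_i:\mathcal{A}_i\to\mathcal{A}_i$, $\mathcal{N}_2:\mathcal{A}_0\times\mathcal{A}_0\to\mathcal{A}_1$; when $\mu_3=0$ and $\mathcal{N}_2=0$ (the strict case) its axioms reduce to: $\partial\mathcal{N}_1=\mathcal{N}_0\partial$;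 $\mathcal{N}_0(\mathcal{N}_0(a)b+a\mathcal{N}_0(b)-\mathcal{N}_0(ab))=\mathcal{N}_0(a)\mathcal{N}_0(b)$; $\mathcal{N}_1(\mathcal{N}_0(a)u+a\mathcal{N}_1(u)-\mathcal{N}_1(au))=\mathcal{N}_0(a)\mathcal{N}_1(u)$; $\mathcal{N}_1(\mathcal{N}_1(u)a+u\mathcal{N}_0(a)-\mathcal{N}_1(ua))=\mathcal{N}_1(u)\mathcal{N}_0(a)$ (juxtaposition denotes $\mu_2$). A strict 2-term homotopy Nijenhuis algebra is a 2-term $A_\infty$-algebra with $\mu_3=0$ together with a homotopy Nijenhuis operator with $\mathcal{N}_2=0$. Nijenhuis algebra: associative $(A,\cdot)$ with linear $N$, $N(a)N(b)=N(N(a)b+aN(b)-N(ab))$; homomorphism: algebra map commuting with operators. Nijenhuis bimodule: $A$-bimodule with $N_M$ satisfying $N(a)\triangleright N_M(u)=N_M(N(a)\triangleright u+a\triangleright N_M(u)-N_M(a\triangleright u))$, $N_M(u)\triangleleft N(a)=N_M(N_M(u)\triangleleft a+u\triangleleft N(a)-N_M(u\triangleleft a))$. A crossed module of Nijenhuis algebras $\big(((A,\cdot),N),((A_1,\cdot_1),N_1),\varphi,\triangleright,\triangleleft\big)$: Nijenhuis algebras $((A,\cdot),N)$, $((A_1,\cdot_1),N_1)$, a Nijenhuis algebra homomorphism $\varphi:A_1\to A$, bilinear $\triangleright:A\times A_1\to A_1$, $\triangleleft:A_1\times A\to A_1$ such that $((A_1,\triangleright,\triangleleft),N_1)$ is a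 Nijenhuis bimodule over $((A,\cdot),N)$ and, for $a\in A$, $u,v\in A_1$: $a\triangleright(u\cdot_1v)=(a\triangleright u)\cdot_1v$, $(u\triangleleft a)\cdot_1v=u\cdot_1(a\triangleright v)$, $(u\cdot_1v)\triangleleft a=u\cdot_1(v\triangleleft a)$, $\varphi(a\triangleright u)=a\cdot\varphi(u)$, $\varphi(u\triangleleft a)=\varphi(u)\cdot a$, $\varphi(u)\triangleright v=u\cdot_1v=u\triangleleft\varphi(v)$. *)

From HB Require Import structures.
From mathcomp Require Import all_boot all_order all_algebra.
Set Implicit Arguments. Unset Strict Implicit. Unset Printing Implicit Defensive.
Import GRing.Theory.
Local Open Scope ring_scope.

Section Defs.
Variable k : fieldType.

Definition is_lin (U V : lmodType k) (f : U -> V) : Prop :=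
  forall (c : k) (x y : U), f (c *: x + y) = c *: f x + f y.

Definition is_bilin (U V W : lmodType k) (f : U -> V -> W) : Prop :=
  (forall y : V, is_lin (fun x : U => f x y)) /\ (forall x : U, is_lin (f x)).

(** ---------- Strict 2-term homotopy Nijenhuis algebras ----------
    Data on A1 --d--> A0: mu2 splits into mu00 : A0xA0->A0,
    mu01 : A0xA1->A1, mu10 : A1xA0->A1; mu3 = 0 and N2 = 0 are not
    stored (strict case). *)
Record strictHNA_data (A0 A1 : lmodType k) := StrictHNAData {
  hd   : A1 -> A0;
  hm00 : A0 -> A0 -> A0;
  hm01 : A0 -> A1 -> A1;
  hm10 : A1 -> A0 -> A1;
  hN0  : A0 -> A0;
  hN1  : A1 -> A1 }.

Definition is_strictHNA (A0 A1 : lmodType k) (D : strictHNA_data A0 A1) : Prop :=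
  let d := hd D in let m00 := hm00 D in let m01 := hm01 D in
  let m10 := hm10 D in let N0 := hN0 D in let N1 := hN1 D in
  (is_lin d /\ is_bilin m00 /\ is_bilin m01 /\ is_bilin m10 /\
      is_lin N0 /\ is_lin N1) /\
  ((forall a u, d (m01 a u) = m00 a (d u)) /\
      (forall u a, d (m10 u a) = m00 (d u) a) /\
      (forall u v, m01 (d u) v = m10 u (d v)) /\
      (forall a b c, m00 (m00 a b) c = m00 a (m00 b c)) /\
      (forall a b u, m01 (m00 a b) u = m01 a (m01 b u)) /\
      (forall a u b, m10 (m01 a u) b = m01 a (m10 u b)) /\
      (forall u a b, m10 (m10 u a) b = m10 u (m00 a b))) /\
  [/\ (forall u, d (N1 u) = N0 (d u)),
      (forall a b, N0 (m00 (N0 a) b + m00 a (N0 b) - N0 (m00 a b))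
                   = m00 (N0 a) (N0 b)),
      (forall a u, N1 (m01 (N0 a) u + m01 a (N1 u) - N1 (m01 a u))
                   = m01 (N0 a) (N1 u)) &
      (forall u a, N1 (m10 (N1 u) a + m10 u (N0 a) - N1 (m10 u a))
                   = m10 (N1 u) (N0 a))].

Definition is_assoc_alg (A : lmodType k) (mul : A -> A -> A) : Prop :=
  is_bilin mul /\ forall a b c, mul (mul a b) c = mul a (mul b c).

Definition is_nijenhuis_alg (A : lmodType k) (mul : A -> A -> A) (N : A -> A) : Prop :=
  [/\ is_assoc_alg mul, is_lin N &
      forall a b, mul (N a) (N b) = N (mul (N a) b + mul a (N b) - N (mul a b))].

Definition is_nijenhuis_hom (A B : lmodType k) (mulA : A -> A -> A) (NA : A -> A)
    (mulB : B -> B -> B) (NB : B -> B) (f : A -> B) : Prop :=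
  [/\ is_lin f, (forall a b, f (mulA a b) = mulB (f a) (f b)) &
      forall a, f (NA a) = NB (f a)].

Definition is_bimodule (A M : lmodType k) (mul : A -> A -> A)
    (l : A -> M -> M) (r : M -> A -> M) : Prop :=
  [/\ is_bilin l, is_bilin r,
      (forall a b u, l (mul a b) u = l a (l b u)),
      (forall u a b, r u (mul a b) = r (r u a) b) &
      (forall a u b, r (l a u) b = l a (r u b))].

Definition is_nijenhuis_bimodule (A M : lmodType k) (mul : A -> A -> A) (N : A -> A)
    (l : A -> M -> M) (r : M -> A -> M) (NM : M -> M) : Prop :=
  [/\ is_bimodule mul l r, is_lin NM,
      (forall a u, l (N a) (NM u) = NM (l (N a) u + l a (NM u) - NM (l a u))) &
      (forall u a, r (NM u) (N a) = NM (r (NM u) a + r u (N a) - NM (r u a)))].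

Record crossed_data (A A1 : lmodType k) := CrossedData {
  cmul  : A -> A -> A;
  cN    : A -> A;
  cmul1 : A1 -> A1 -> A1;
  cN1   : A1 -> A1;
  cphi  : A1 -> A;
  cl    : A -> A1 -> A1;
  cr    : A1 -> A -> A1 }.

Definition is_crossed_module (A A1 : lmodType k) (C : crossed_data A A1) : Prop :=
  let mul := cmul C in let N := cN C in let mul1 := cmul1 C in
  let N1 := cN1 C in let phi := cphi C in let l := cl C in let r := cr C in
  [/\ is_nijenhuis_alg mul N, is_nijenhuis_alg mul1 N1,
      is_nijenhuis_hom mul1 N1 mul N phi &
      is_nijenhuis_bimodule mul N l r N1] /\
  ((forall a u v, l a (mul1 u v) = mul1 (l a u) v) /\
      (forall u a v, mul1 (r u a) v = mul1 u (l a v)) /\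
      (forall u v a, r (mul1 u v) a = mul1 u (r v a)) /\
      (forall a u, phi (l a u) = mul a (phi u)) /\
      (forall u a, phi (r u a) = mul (phi u) a) /\
      (forall u v, l (phi u) v = mul1 u v /\ mul1 u v = r u (phi v))).

Definition hna_to_crossed (A0 A1 : lmodType k) (D : strictHNA_data A0 A1)
  : crossed_data A0 A1 :=
  CrossedData (hm00 D) (hN0 D) (fun u v => hm01 D (hd D u) v) (hN1 D)
              (hd D) (hm01 D) (hm10 D).

Definition crossed_to_hna (A A1 : lmodType k) (C : crossed_data A A1)
  : strictHNA_data A A1 :=
  StrictHNAData (cphi C) (cmul C) (cl C) (cr C) (cN C) (cN1 C).

End Defs.

From HB Require Import structures.
From mathcomp Require Import all_boot all_order all_algebra.
From Stdlib Require Import FunctionalExtensionality.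
Set Implicit Arguments. Unset Strict Implicit. Unset Printing Implicit Defensive.
Local Open Scope ring_scope.

(* Both structures amount to the same data: a Nijenhuis algebra (A0, N0), a
   Nijenhuis bimodule (A1, N1) over it, and an equivariant map d : A1 -> A0
   commuting with the operators and satisfying the Peiffer identity
   d(u) v = u d(v).  In a crossed module the product of A1 is forced to be
   u v = d(u) v, and for this induced product the crossed-module axioms follow
   from the bimodule axioms; the two constructions only repackage this data. *)

Section Peiffer.
Variables (k : fieldType) (A M : lmodType k).

Lemma is_lin_comp (U : lmodType k) (f : U -> A) (g : A -> M) :
  is_lin f -> is_lin g -> is_lin (fun x => g (f x)).
Proof. by move=> Lf Lg c x y; rewrite Lf Lg. Qed.

Variables (mul : A -> A -> A) (N : A -> A).
Variables (l : A -> M -> M) (r : M -> A -> M) (NM : M -> M) (d : M -> A).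

Definition is_nijenhuis_peiffer_map : Prop :=
  [/\ is_lin d, (forall a u, d (l a u) = mul a (d u)),
      (forall u a, d (r u a) = mul (d u) a), (forall u, d (NM u) = N (d u)) &
      (forall u v, l (d u) v = r u (d v))].

Hypotheses (bimodM : is_nijenhuis_bimodule mul N l r NM)
           (peifferM : is_nijenhuis_peiffer_map).

Lemma nijenhuis_alg_induced : is_nijenhuis_alg (fun u v => l (d u) v) NM.
Proof.
have [[[Bl_l Bl_r] _ l_mul _ _] LNM NMl _] := bimodM.
have [Ld d_l _ d_NM _] := peifferM.
split=> //.
- split; first by split=> [v|u]; [exact: is_lin_comp Ld (Bl_l v) | exact: Bl_r].
  by move=> u v w; rewrite d_l l_mul.
- by move=> u v; rewrite d_NM NMl.
Qed.

Lemma crossed_module_induced :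
  is_nijenhuis_alg mul N ->
  is_crossed_module (CrossedData mul N (fun u v => l (d u) v) NM d l r).
Proof.
move=> algA; have [[_ _ l_mul _ l_r] _ _ _] := bimodM.
have [Ld d_l d_r d_NM peiffer] := peifferM.
rewrite /is_crossed_module /=.
split; first by split=> //; exact: nijenhuis_alg_induced.
split; first by move=> a u v; rewrite d_l l_mul.
split; first by move=> u a v; rewrite d_r l_mul.
split; first by move=> u v a; rewrite l_r.
by do 2!split=> //.
Qed.

End Peiffer.

Lemma strictHNAE (k : fieldType) (A0 A1 : lmodType k) (d : A1 -> A0)
    (m00 : A0 -> A0 -> A0) (m01 : A0 -> A1 -> A1) (m10 : A1 -> A0 -> A1)
    (N0 : A0 -> A0) (N1 : A1 -> A1) :
  is_strictHNA (StrictHNAData d m00 m01 m10 N0 N1) <->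
  [/\ is_nijenhuis_alg m00 N0, is_nijenhuis_bimodule m00 N0 m01 m10 N1 &
      is_nijenhuis_peiffer_map m00 N0 m01 m10 N1 d].
Proof.
rewrite /is_strictHNA /=; split.
- move=> [[? [? [? [? [? ?]]]]] [[? [? [? [? [? [? ?]]]]]] [? ? ? ?]]].
  by split; do 2?split=> //.
- by move=> [[[? ?] ? ?] [[? ? ? ? ?] ? ? ?] [? ? ? ? ?]]; do 9?split=> //.
Qed.

Section CrossedModule.
Variables (k : fieldType) (A A1 : lmodType k) (C : crossed_data A A1).
Hypothesis crossedC : is_crossed_module C.

Lemma crossed_module_mul1E : cmul1 C = fun u v => cl C (cphi C u) v.
Proof.
have [_ [_ [_ [_ [_ [_ phi_mul1]]]]]] := crossedC.
by apply: functional_extensionality => u; apply: functional_extensionality => v;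
  case: (phi_mul1 u v).
Qed.

Lemma crossed_module_peiffer :
  [/\ is_nijenhuis_alg (cmul C) (cN C),
      is_nijenhuis_bimodule (cmul C) (cN C) (cl C) (cr C) (cN1 C) &
      is_nijenhuis_peiffer_map (cmul C) (cN C) (cl C) (cr C) (cN1 C) (cphi C)].
Proof.
have [[algA _ [Lphi _ phi_N] bimod] [_ [_ [_ [phi_l [phi_r phi_mul1]]]]]] :=
  crossedC.
split=> //; split=> // u v.
by have [-> ->] := phi_mul1 u v.
Qed.

End CrossedModule.

Theorem theorem6p9 (k : fieldType) (char0 : [pchar k] =i pred0)
    (A0 A1 : lmodType k) :
  (forall D : strictHNA_data A0 A1,
      is_strictHNA D -> is_crossed_module (hna_to_crossed D)) /\
  (forall C : crossed_data A0 A1,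
      is_crossed_module C -> is_strictHNA (crossed_to_hna C)) /\
  (forall D : strictHNA_data A0 A1,
      is_strictHNA D -> crossed_to_hna (hna_to_crossed D) = D) /\
  (forall C : crossed_data A0 A1,
      is_crossed_module C -> hna_to_crossed (crossed_to_hna C) = C).
Proof.
split; [|split; [|split]].
- case=> d m00 m01 m10 N0 N1 /strictHNAE [algA bimod peiffer].
  exact: crossed_module_induced.
- case=> mul N mul1 N1 phi l r crossedC.
  by apply/strictHNAE; exact: crossed_module_peiffer.
- by case.
- case=> mul N mul1 N1 phi l r /crossed_module_mul1E /= mul1E.
  by rewrite /hna_to_crossed /= mul1E.
Qed.
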